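(* Let $p$ be a prime, $n,e$ positive integers, and $u_{p,n,e}:\{1,\dots,n\}\to\mathbb{N}$, $u_{p,n,e}(k)=e\,\nu_p\binom{n}{k}+k$. Write $\ell=\log_p\frac{e}{p-1}$. Then the minimum value of $u_{p,n,e}$ is attained exactly at: (a) $k\in\{\frac{e}{p-1},\frac{pe}{p-1}\}$, if $\ell$ is an integer and $\ell<\nu_p(n)$; the minimum value is then $e\big(\nu_p(n)+\frac1{p-1}-\ell\big)$; (b) $k=p^{\nu_p(n)}$, if either $\ell$ is an integer with $\ell\ge\nu_p(n)$, or $\ell$ is not an integer and $\lceil\ell\rceil>\nu_p(n)$; the minimum value is then $p^{\nu_p(n)}$; (c) $k=p^{\lceil\ell\rceil}$, if $\ell$ is not an integer and $\lceil\ell\rceil\le\nu_p(n)$; the minimum value is then $e(\nu_p(n)-\lceil\ell\rceil)+p^{\lceil\ell\rceil}$.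
   Context: $\nu_p$ denotes the $p$-adic valuation. *)

From HB Require Import structures.
From mathcomp Require Import all_boot all_order all_algebra.
Set Implicit Arguments. Unset Strict Implicit. Unset Printing Implicit Defensive.
Import Order.TTheory GRing.Theory Num.Theory.

Definition uval (p n e k : nat) : nat := (e * logn p 'C(n, k) + k)%N.

Definition is_min_at (p n e k : nat) : Prop :=
  (0 < k <= n)%N /\ forall j : nat, (0 < j <= n)%N -> (uval p n e k <= uval p n e j)%N.

Local Open Scope ring_scope.

(* the rational number e/(p-1), so that ell = log_p (ell_ratio p e) *)
Definition ell_ratio (p e : nat) : rat := (e%:R : rat) / ((p%:R : rat) - 1).

Definition ell_eq_int (p e : nat) (m : int) : Prop := ell_ratio p e = (p%:R : rat) ^ m.

Definition ell_is_int (p e : nat) : Prop := exists m : int, ell_eq_int p e m.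

(* c = ceil(ell): p^(c-1) < e/(p-1) <= p^c (p^x being increasing since p > 1) *)
Definition ell_ceil (p e : nat) (c : int) : Prop :=
  (p%:R : rat) ^ (c - 1) < ell_ratio p e <= (p%:R : rat) ^ c.

From HB Require Import structures.
From mathcomp Require Import all_boot all_order all_algebra.
From mathcomp Require Import zify ring.
Set Implicit Arguments. Unset Strict Implicit. Unset Printing Implicit Defensive.
Import Order.TTheory GRing.Theory Num.Theory.

(* From k * 'C(n, k) = n * 'C(n - 1, k - 1) one gets nu_p 'C(n, k) >= nu_p n - nu_p k,
   with equality at k = p ^ j for j <= nu_p n.  Since moreover k >= p ^ (nu_p k), every
   u(k) is at least g(j) = e (nu_p n - j) + p ^ j for some j <= nu_p n, with equality only
   when k = p ^ j; so the minimizers of u are the p ^ j with j minimizing g on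
   [0, nu_p n].  As g(j + 1) - g(j) = (p - 1) p ^ j - e, g decreases while
   p ^ j < e / (p - 1) and increases afterwards, which locates its minimum at ceil(ell)
   (capped at nu_p n), shared by ell and ell + 1 when ell is an integer below nu_p n. *)

Section BinomialValuation.

Variable p : nat.
Hypothesis p_pr : prime p.

Lemma leq_logn_bin n k : 0 < k <= n -> logn p n <= logn p 'C(n, k) + logn p k.
Proof.
case: k => // k /andP[_ lt_kn].
have := congr1 (logn p) (mul_bin_diag n k).
by rewrite !lognM ?bin_gt0 //; lia.
Qed.

Lemma logn_subn_pfactor n j a :
  0 < n -> p ^ j %| n -> 0 < a < p ^ j -> logn p (n - a) = logn p a.
Proof.
move=> n_gt0 pj_dvd /andP[a_gt0 a_lt].
have pj_le : p ^ j <= n by apply: dvdn_leq.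
set t := logn p a.
have pt_dvd_a : p ^ t %| a by apply: pfactor_dvdnn.
have t_lt_j : t < j.
  by rewrite -(ltn_exp2l _ _ (prime_gt1 p_pr)); apply: leq_ltn_trans a_lt; apply: dvdn_leq.
have pdvd_n i : i <= j -> p ^ i %| n by move=> le_ij; apply: dvdn_trans pj_dvd; apply: dvdn_exp2l.
have dvd_na : p ^ t %| n - a by apply: dvdn_sub => //; apply/pdvd_n/ltnW.
have ndvd_na : ~~ (p ^ t.+1 %| n - a).
  apply/negP => dvd_na'.
  have := dvdn_sub (pdvd_n _ t_lt_j) dvd_na'.
  by rewrite subKn ?pfactor_dvdn //; lia.
by move: dvd_na ndvd_na; rewrite !pfactor_dvdn //; lia.
Qed.

Lemma logn_bin_pred_eq0 n j i :
  0 < n -> p ^ j %| n -> i < p ^ j -> logn p 'C(n.-1, i) = 0.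
Proof.
move=> n_gt0 pj_dvd; have pj_le : p ^ j <= n by apply: dvdn_leq.
elim: i => [|i IHi] lt_i; first by rewrite bin0 logn1.
have := congr1 (logn p) (mul_bin_left n.-1 i).
rewrite !lognM ?bin_gt0 ?IHi; try lia.
have -> : n.-1 - i = n - i.+1 by lia.
by rewrite (@logn_subn_pfactor n j i.+1) //; lia.
Qed.

Lemma logn_bin_pfactor n j : 0 < n -> p ^ j %| n -> logn p 'C(n, p ^ j) + j = logn p n.
Proof.
move=> n_gt0 pj_dvd.
have pj_gt0 : 0 < p ^ j by rewrite expn_gt0 prime_gt0.
have pj_le : p ^ j <= n by apply: dvdn_leq.
have := congr1 (logn p) (mul_bin_diag n (p ^ j).-1).
rewrite prednK // !lognM ?bin_gt0 ?pfactorK //; last by lia.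
by rewrite (logn_bin_pred_eq0 n_gt0 pj_dvd) //; lia.
Qed.

Lemma leq_predMexp i j : i <= j -> p.-1 * p ^ i <= p.-1 * p ^ j.
Proof. by move=> le_ij; rewrite leq_mul2l leq_pexp2l ?orbT ?prime_gt0. Qed.

Lemma ltn_predMexp i j : i < j -> p.-1 * p ^ i < p.-1 * p ^ j.
Proof.
have p_gt1 := prime_gt1 p_pr.
by move=> lt_ij; rewrite ltn_pmul2l ?ltn_exp2l //; lia.
Qed.

End BinomialValuation.

Section PowerCandidates.

Variables p n e : nat.
Hypotheses (p_pr : prime p) (n_gt0 : 0 < n).

Local Notation v := (logn p n).

Definition upow j := e * (v - j) + p ^ j.

Definition upow_min j := j <= v /\ forall i, i <= v -> upow j <= upow i.

Lemma pfactor_in_range j : j <= v -> 0 < p ^ j <= n.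
Proof. by move=> le_jv; rewrite expn_gt0 prime_gt0 // dvdn_leq // pfactor_dvdn. Qed.

Lemma uval_pfactor j : j <= v -> uval p n e (p ^ j) = upow j.
Proof.
move=> le_jv.
have pj_dvd : p ^ j %| n by rewrite pfactor_dvdn.
by rewrite /uval /upow -(logn_bin_pfactor p_pr n_gt0 pj_dvd) addnK.
Qed.

Lemma uval_ge_upow k : 0 < k <= n ->
  exists j, [/\ j <= v, upow j <= uval p n e k & uval p n e k = upow j -> k = p ^ j].
Proof.
move=> k_range; have k_gt0 : 0 < k by case/andP: k_range.
have := leq_logn_bin p_pr k_range; rewrite /uval /upow.
set t := logn p k => bin_ge.
have pt_le_k : p ^ t <= k by apply: dvdn_leq => //; apply: pfactor_dvdnn.
case: (leqP t v) => [le_tv | lt_vt].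
  have : e * (v - t) <= e * logn p 'C(n, k).
    by rewrite leq_mul2l leq_subLR addnC bin_ge orbT.
  by exists t; split=> //; lia.
have : p ^ v < p ^ t by rewrite ltn_exp2l ?prime_gt1.
by exists v; rewrite subnn muln0 add0n; split=> //; lia.
Qed.

Lemma is_min_atP k : is_min_at p n e k <-> exists2 j, upow_min j & k = p ^ j.
Proof.
split=> [[k_range k_min] | [j [le_jv j_min] ->]].
  have [j [le_jv le_uk eq_uk]] := uval_ge_upow k_range.
  have eq_ukj : uval p n e k = upow j.
    apply/eqP; rewrite eqn_leq le_uk andbT -uval_pfactor //.
    exact/k_min/pfactor_in_range.
  exists j; last exact: eq_uk.
  split=> // i le_iv; rewrite -eq_ukj -uval_pfactor //.
  exact/k_min/pfactor_in_range.
split=> [|i i_range]; first exact: pfactor_in_range.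
have [j' [le_jv' le_uj' _]] := uval_ge_upow i_range.
rewrite uval_pfactor //; exact: leq_trans (j_min _ le_jv') le_uj'.
Qed.

Lemma upowS j : j < v -> upow j.+1 + e = upow j + p.-1 * p ^ j.
Proof.
move=> lt_jv; rewrite /upow expnS -{2}(prednK (prime_gt0 p_pr)) mulSn.
have -> : v - j = (v - j.+1).+1 by lia.
by rewrite mulnS; lia.
Qed.

Lemma upow_decr c : c <= v -> (forall i, i < c -> p.-1 * p ^ i < e) ->
  forall i, i < c -> upow c < upow i.
Proof.
move=> le_cv step_lt i lt_ic.
have decr : {in [pred j | j <= c] &, {homo upow : i j / i < j >-> j < i}}.
  apply: homo_ltn_in => [y x z lt_yx lt_zy | j l _ le_lc k /andP[_ lt_kl] | j _].
  - exact: ltn_trans lt_zy lt_yx.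
  - by rewrite !inE in le_lc *; lia.
  - rewrite inE => lt_jc.
    by have := upowS (leq_trans lt_jc le_cv); have := step_lt j lt_jc; lia.
by apply: decr; rewrite ?inE // ltnW.
Qed.

Lemma upow_incr c : e < p.-1 * p ^ c -> forall i, c < i <= v -> upow c < upow i.
Proof.
move=> e_lt i /andP[lt_ci le_iv].
have incr : {in [pred j | c <= j <= v] &, {homo upow : i j / i < j}}.
  apply: homo_ltn_in => [y x z | j l /[!inE] le_cj le_lv k /andP[lt_jk lt_kl] | j].
  - exact: ltn_trans.
  - by rewrite inE; lia.
  - rewrite !inE => /andP[le_cj _] /andP[_ lt_jv].
    have := leq_predMexp p_pr le_cj; have := upowS lt_jv; lia.
by apply: incr; rewrite ?inE; lia.
Qed.

Lemma upow_min_unique c : c <= v ->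
  (forall i, i < c -> p.-1 * p ^ i < e) -> (c < v -> e < p.-1 * p ^ c) ->
  forall j, upow_min j <-> j = c.
Proof.
move=> le_cv before_c after_c.
have c_lt i : i <= v -> i != c -> upow c < upow i.
  move=> le_iv; case: (ltngtP i c) => // [lt_ic | lt_ci] _.
    exact: upow_decr.
  by apply: upow_incr; [apply: after_c; lia | lia].
move=> j; split=> [[le_jv j_min] | ->].
  apply/eqP; apply: contraTT (j_min c le_cv); rewrite -ltnNge; exact: c_lt.
split=> // i le_iv; case: (eqVneq i c) => [-> // | ne_ic].
exact/ltnW/c_lt.
Qed.

Lemma upow_min_tie m : m < v -> e = p.-1 * p ^ m ->
  forall j, upow_min j <-> j = m \/ j = m.+1.
Proof.
move=> lt_mv e_def.
have eq_upow : upow m.+1 = upow m by have := upowS lt_mv; lia.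
have below i : i < m -> upow m < upow i.
  by apply: upow_decr; [exact: ltnW | move=> i' lt_i'm; rewrite e_def ltn_predMexp].
have above i : m.+1 < i <= v -> upow m < upow i.
  by rewrite -eq_upow; apply: upow_incr; rewrite e_def ltn_predMexp.
have m_min : upow_min m.
  split=> [|i le_iv]; first exact: ltnW.
  case: (ltngtP i m) => [/below/ltnW // | lt_mi | -> //].
  case: (ltngtP i m.+1) => [| lt_Smi | ->]; [lia | | by rewrite eq_upow].
  by apply/ltnW/above; lia.
move=> j; split=> [[le_jv j_min] | [] ->]; last 2 first.
- exact: m_min.
- by case: m_min; rewrite -eq_upow; split=> //; exact: lt_mv.
have := j_min m (ltnW lt_mv).
case: (ltngtP j m) => [/below | lt_mj | ->]; [lia | | by left].
case: (ltngtP j m.+1) => [| lt_Smj | ->]; [lia | | by right].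
by have := above j; lia.
Qed.

Lemma uval_min k j : is_min_at p n e k -> upow_min j -> uval p n e k = upow j.
Proof.
move=> /is_min_atP [i [le_iv i_min] ->] [le_jv j_min].
by rewrite uval_pfactor //; apply/eqP; rewrite eqn_leq i_min ?j_min.
Qed.

Lemma min_at_unique c : c <= v ->
  (forall i, i < c -> p.-1 * p ^ i < e) -> (c < v -> e < p.-1 * p ^ c) ->
  forall k, (is_min_at p n e k <-> k = p ^ c) /\ (is_min_at p n e k -> uval p n e k = upow c).
Proof.
move=> le_cv before_c after_c k; have min_c := upow_min_unique le_cv before_c after_c.
split=> [|k_min]; last exact: uval_min k_min ((min_c c).2 erefl).
rewrite is_min_atP; split=> [[j /min_c -> //] | ->].
by exists c; first exact/min_c.
Qed.

Lemma min_at_tie m : m < v -> e = p.-1 * p ^ m ->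
  forall k, (is_min_at p n e k <-> k = p ^ m \/ k = p ^ m.+1) /\
    (is_min_at p n e k -> uval p n e k = upow m).
Proof.
move=> lt_mv e_def k; have min_m := upow_min_tie lt_mv e_def.
split=> [|k_min]; last by apply: uval_min k_min _; apply/min_m; left.
rewrite is_min_atP; split=> [[j /min_m [] -> ->] | [] ->]; [by left | by right | |].
- by exists m => //; apply/min_m; left.
- by exists m.+1 => //; apply/min_m; right.
Qed.

End PowerCandidates.

Section EllConditions.

Variables p e : nat.
Hypotheses (p_pr : prime p) (e_gt0 : 0 < e).

Local Open Scope ring_scope.

Let predp_gt0 : (0 < p.-1)%N.
Proof. by have := prime_gt1 p_pr; lia. Qed.

Lemma ell_ratioE : ell_ratio p e = e%:R / p.-1%:R.
Proof. by rewrite /ell_ratio -{1}(prednK (prime_gt0 p_pr)) -addn1 natrD addrK. Qed.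

Lemma ell_ratio_le_pow k : (ell_ratio p e <= p%:R ^+ k) = (e <= p.-1 * p ^ k)%N.
Proof. by rewrite ell_ratioE ler_pdivrMr ?ltr0n // -natrX -natrM ler_nat mulnC. Qed.

Lemma pow_le_ell_ratio k : (p%:R ^+ k <= ell_ratio p e) = (p.-1 * p ^ k <= e)%N.
Proof. by rewrite ell_ratioE ler_pdivlMr ?ltr0n // -natrX -natrM ler_nat mulnC. Qed.

Lemma pow_Negz_lt_ell_ratio m : (p%:R : rat) ^ Negz m < ell_ratio p e.
Proof.
have -> : (p%:R : rat) ^ Negz m = (p ^ m.+1)%:R^-1 by rewrite natrX.
rewrite ell_ratioE ltr_pdivlMr ?ltr0n // mulrC ltr_pdivrMr ?ltr0n ?expn_gt0 ?prime_gt0 //.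
rewrite -natrM ltr_nat.
have p_le : (p <= p ^ m.+1)%N by rewrite expnS leq_pmulr ?expn_gt0 ?prime_gt0.
rewrite -ltnS prednK ?prime_gt0 // ltnS.
exact: leq_trans p_le (leq_pmull _ e_gt0).
Qed.

Lemma ell_eq_intP m : ell_eq_int p e m <-> exists2 k : nat, m = k & e = (p.-1 * p ^ k)%N.
Proof.
rewrite /ell_eq_int; case: m => k; last first.
  by split=> [/eqP | [] //]; rewrite gt_eqF ?pow_Negz_lt_ell_ratio.
split=> [ratio_eq | [k' [->] e_def]]; last first.
  by apply/eqP; rewrite eq_le ell_ratio_le_pow pow_le_ell_ratio e_def leqnn.
exists k => //; apply/eqP; rewrite eqn_leq -ell_ratio_le_pow -pow_le_ell_ratio.
by rewrite ratio_eq lexx.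
Qed.

Lemma ell_ceilP c : ell_ceil p e c ->
  exists2 k : nat, c = k &
    (forall i, i < k -> p.-1 * p ^ i < e)%N /\ (e <= p.-1 * p ^ k)%N.
Proof.
rewrite /ell_ceil; case: c => k /andP[lo hi]; last first.
  by move: hi; rewrite leNgt pow_Negz_lt_ell_ratio.
exists k; split=> [|]; last by rewrite -ell_ratio_le_pow.
case: k lo {hi} => [|k] + i //.
have -> : Posz k.+1 - 1 = Posz k by rewrite -addn1 PoszD addrK.
rewrite ltNge ell_ratio_le_pow -ltnNge ltnS => step_lt le_ik.
exact: leq_ltn_trans (leq_predMexp p_pr le_ik) step_lt.
Qed.

End EllConditions.

Local Open Scope ring_scope.

Theorem mainTheorem14 (p n e : nat) (hp : prime p) (hn : (0 < n)%N) (he : (0 < e)%N) :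
  (* (a) *)
  (forall m : int, ell_eq_int p e m -> m < (logn p n)%:Z ->
     (forall k : nat, is_min_at p n e k <->
        ((k%:R : rat) = ell_ratio p e \/ (k%:R : rat) = (p%:R : rat) * ell_ratio p e)) /\
     (forall k : nat, is_min_at p n e k ->
        ((uval p n e k)%:R : rat) =
          (e%:R : rat) * ((logn p n)%:R + 1 / ((p%:R : rat) - 1) - m%:~R))) /\
  (* (b) *)
  ((exists m : int, ell_eq_int p e m /\ (logn p n)%:Z <= m) \/
   (~ ell_is_int p e /\ exists c : int, ell_ceil p e c /\ (logn p n)%:Z < c) ->
     (forall k : nat, is_min_at p n e k <-> k = (p ^ logn p n)%N) /\
     (forall k : nat, is_min_at p n e k -> uval p n e k = (p ^ logn p n)%N)) /\
  (* (c) *)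
  (forall c : int, ~ ell_is_int p e -> ell_ceil p e c -> c <= (logn p n)%:Z ->
     (forall k : nat, is_min_at p n e k <-> (k%:R : rat) = (p%:R : rat) ^ c) /\
     (forall k : nat, is_min_at p n e k ->
        ((uval p n e k)%:R : rat) =
          (e%:R : rat) * ((logn p n)%:R - c%:~R) + (p%:R : rat) ^ c)).
Proof.
have natr_inj := mulrIn (oner_neq0 rat).
split; [|split].
- move=> _ /(ell_eq_intP hp he) [m -> e_def]; rewrite ltz_nat => lt_mv.
  have ratio_pow : ell_ratio p e = (p ^ m)%:R.
    by rewrite natrX; apply/(ell_eq_intP hp he m); exists m.
  split=> k; have [min_m val_m] := min_at_tie hp hn lt_mv e_def k.
    rewrite min_m ratio_pow -natrM -expnS.
    by split=> [[] -> | [] /natr_inj ->]; [left | right | left | right].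
  move=> /val_m ->; rewrite /upow natrD natrM natrB ?(ltnW lt_mv) //.
  by rewrite -ratio_pow /ell_ratio; ring.
- move=> ell_ge_v.
  have before_v : (forall i, i < logn p n -> p.-1 * p ^ i < e)%N.
    case: ell_ge_v => [[_ [/(ell_eq_intP hp he) [m -> e_def]]] | [_ [_ [/(ell_ceilP hp he) [c -> [before_c _]]]]]].
      by rewrite lez_nat => le_vm i lt_iv; rewrite e_def ltn_predMexp // (leq_trans lt_iv).
    by rewrite ltz_nat => lt_vc i lt_iv; apply/before_c/(ltn_trans lt_iv).
  have no_after : (logn p n < logn p n -> e < p.-1 * p ^ logn p n)%N by rewrite ltnn.
  split=> k; have [min_v val_v] := min_at_unique hp hn (leqnn _) before_v no_after k.
    exact: min_v.
  by move=> /val_v ->; rewrite /upow subnn muln0.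
- move=> _ not_int /(ell_ceilP hp he) [c -> [before_c e_le]]; rewrite lez_nat => le_cv.
  have after_c : (c < logn p n -> e < p.-1 * p ^ c)%N.
    move=> _; rewrite ltn_neqAle e_le andbT; apply/eqP => e_eq; apply: not_int.
    by exists c; apply/(ell_eq_intP hp he); exists c.
  have pow_nat : (p%:R : rat) ^ c = (p ^ c)%:R by rewrite natrX.
  split=> k; have [min_c val_c] := min_at_unique hp hn le_cv before_c after_c k; rewrite pow_nat.
    by rewrite min_c; split=> [-> | /natr_inj].
  by move=> /val_c ->; rewrite /upow natrD natrM natrB.
Qed.
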